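(* For every odd integer $m\geq 3$, the edge set of $C_m[4]$ cannot be partitioned into one $C_4$-factor and three $C_m$-factors.
   Context: For a graph $G$ and a positive integer $k$, $G[k]$ is the graph with vertex set $V(G)\times\{0,1,\dots,k-1\}$ in which $(u,i)$ and $(w,j)$ are adjacent if and only if $uw\in E(G)$. $C_m$ is the cycle of length $m$. A $C_k$-factor of a graph is a spanning subgraph each of whose components is a cycle of length $k$. *)

From mathcomp Require Import all_boot.
Set Implicit Arguments. Unset Strict Implicit. Unset Printing Implicit Defensive.

Definition cyc_adj (n : nat) : rel 'I_n :=
  fun i j => (val j == (val i).+1 %% n) || (val i == (val j).+1 %% n).

Definition Cm (m : nat) : rel 'I_m := @cyc_adj m.

Definition blowup (T : finType) (G : rel T) (k : nat) : rel (T * 'I_k) :=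
  fun x y => G x.1 y.1.

(* F (a spanning subgraph of G, given by its edge relation) is a C_k-factor of G:
   F uses only edges of G, and the connected component (in F) of every vertex v
   is a cycle of length k, i.e. is the image of an injective c : 'I_k -> V with
   F (c i) (c j) exactly when i j are adjacent in C_k. *)
Definition is_Ck_factor (V : finType) (G F : rel V) (k : nat) : Prop :=
  subrel F G /\
  forall v : V, exists c : 'I_k -> V,
    [/\ injective c,
        (forall w, connect F v w = (w \in codom c)) &
        (forall i j, F (c i) (c j) = @cyc_adj k i j)].

Definition edge_partition4 (V : finType) (G F0 F1 F2 F3 : rel V) : Prop :=
  forall x y, G x y ->
    (F0 x y || F1 x y || F2 x y || F3 x y) /\
    ~~ (F0 x y && F1 x y) /\ ~~ (F0 x y && F2 x y) /\ ~~ (F0 x y && F3 x y) /\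
    ~~ (F1 x y && F2 x y) /\ ~~ (F1 x y && F3 x y) /\ ~~ (F2 x y && F3 x y).

(* Every edge of C_m[4] joins consecutive layers V_u = {u} x 'I_4, so along a
   closed walk of length n with b backward steps we get 2 b = n (mod m).  For a
   C_m-factor and m odd this forces b = 0 or b = m: each m-cycle winds once
   around C_m, so every vertex has one factor-neighbour in the next layer and one
   in the previous layer.  A 4-cycle cannot wind (m does not divide 4), so it
   turns back at some vertex v, which thus has two C_4-neighbours in one adjacent
   layer.  Adding one neighbour from each C_m-factor gives five distinct
   neighbours of v in a layer of size 4. *)

From mathcomp Require Import all_boot zify.
Set Implicit Arguments. Unset Strict Implicit.

Lemma edge_partition4_uniq (T : finType) (G F0 F1 F2 F3 : rel T) v a b y1 y2 y3 :
  edge_partition4 G F0 F1 F2 F3 -> subrel F0 G -> subrel F1 G -> subrel F2 G ->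
  a != b -> F0 v a -> F0 v b -> F1 v y1 -> F2 v y2 -> F3 v y3 ->
  uniq [:: a; b; y1; y2; y3].
Proof.
move=> part F0G F1G F2G ab F0a F0b F1y1 F2y2 F3y3.
have neq (P Q : rel T) y z : subrel P G -> (forall x, G v x -> ~~ (P v x && Q v x)) ->
    P v y -> Q v z -> y != z.
  move=> PG PQ Py Qz; apply: contraTneq Qz => <-.
  by apply: contraNN (PQ y (PG _ _ Py)) => ->; rewrite Py.
have n01 := neq F0 F1 _ _ F0G (fun x h => (part v x h).2.1).
have n02 := neq F0 F2 _ _ F0G (fun x h => (part v x h).2.2.1).
have n03 := neq F0 F3 _ _ F0G (fun x h => (part v x h).2.2.2.1).
have n12 := neq F1 F2 _ _ F1G (fun x h => (part v x h).2.2.2.2.1).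
have n13 := neq F1 F3 _ _ F1G (fun x h => (part v x h).2.2.2.2.2.1).
have n23 := neq F2 F3 _ _ F2G (fun x h => (part v x h).2.2.2.2.2.2).
rewrite /= !inE !negb_or ab (n01 _ _ F0a F1y1) (n02 _ _ F0a F2y2) (n03 _ _ F0a F3y3).
by rewrite (n01 _ _ F0b F1y1) (n02 _ _ F0b F2y2) (n03 _ _ F0b F3y3) (n12 _ _ F1y1 F2y2)
  (n13 _ _ F1y1 F3y3) (n23 _ _ F2y2 F3y3).
Qed.

Section CycleWalk.
Variables (V : finType) (F : rel V) (n : nat) (c : 'I_n -> V) (i0 : 'I_n).
Hypothesis c_adj : forall i j, F (c i) (c j) = cyc_adj i j.

Definition cycle_walk j : V := c (iter j (@ordS n) i0).

Lemma val_iter_ordS j : val (iter j (@ordS n) i0) = (i0 + j) %% n.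
Proof.
elim: j => [|j IHj] /=; first by rewrite addn0 modn_small.
by rewrite IHj -addn1 modnDml addn1 addnS.
Qed.

Lemma cycle_walk_step j : F (cycle_walk j) (cycle_walk j.+1).
Proof. by rewrite c_adj /cyc_adj eqxx. Qed.

Lemma cycle_walk_step_sym j : F (cycle_walk j.+1) (cycle_walk j).
Proof. by rewrite c_adj /cyc_adj eqxx orbT. Qed.

Lemma cycle_walk_closed : cycle_walk n = cycle_walk 0.
Proof.
by rewrite /cycle_walk; congr c; apply: val_inj; rewrite val_iter_ordS modnDr modn_small.
Qed.

Lemma cycle_walk_neq2 j : injective c -> 2 < n -> cycle_walk j != cycle_walk j.+2.
Proof.
move=> c_inj n_gt2; apply/eqP => /c_inj /(congr1 val); rewrite !val_iter_ordS.
by rewrite -addn2 addnA -{1}[i0 + j]addn0 => /eqP; rewrite eqn_modDl mod0n modn_small.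
Qed.
End CycleWalk.

Section BlowupCm.
Variables m k : nat.
Local Notation V := ('I_m * 'I_k)%type.
Local Notation G := (@blowup _ (@Cm m) k).

Definition fwd (x y : V) : bool := val y.1 == (val x.1).+1 %% m.

Lemma blowup_CmE (x y : V) : G x y = fwd x y || fwd y x.
Proof. by []. Qed.

Lemma fwd_mod (x y : V) : fwd x y -> val y.1 = val x.1 + 1 %[mod m].
Proof. by move/eqP ->; rewrite modn_mod addn1. Qed.

Definition side (d : bool) (v y : V) : bool := if d then fwd v y else fwd y v.

Lemma side_fst d (v y z : V) : side d v y -> side d v z -> y.1 = z.1.
Proof.
move=> hy hz; apply: val_inj => /=.
rewrite -(modn_small (ltn_ord y.1)) -(modn_small (ltn_ord z.1)).
case: d hy hz => /fwd_mod hy /fwd_mod hz; first by rewrite hy hz.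
by apply/eqP; rewrite -(eqn_modDr 1) -hy -hz.
Qed.

Lemma uniq_side_size d (v : V) (s : seq V) : uniq s -> all (side d v) s -> size s <= k.
Proof.
move=> us /allP sv; rewrite -(size_map snd).
have /card_uniqP <- : uniq (map snd s).
  rewrite map_inj_in_uniq // => -[y1 y2] [z1 z2] /sv hy /sv hz /= e.
  by have /= -> := side_fst hy hz; rewrite e.
by apply: leq_trans (max_card _) _; rewrite card_ord.
Qed.

Section Walk.
Variable w : nat -> V.
Hypothesis walk_w : forall j, G (w j) (w j.+1).

Definition back_step j : bool := fwd (w j.+1) (w j).

Definition back_steps n : nat := count back_step (iota 0 n).

Lemma side_back_step j : side (back_step j) (w j.+1) (w j).
Proof.
have := walk_w j; rewrite blowup_CmE /side /back_step.
by case: (fwd (w j.+1) (w j)); rewrite ?orbF.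
Qed.

Lemma side_fwd_step j : side (~~ back_step j) (w j) (w j.+1).
Proof.
have := walk_w j; rewrite blowup_CmE /side /back_step.
by case: (fwd (w j.+1) (w j)); rewrite ?orbF.
Qed.

Lemma back_stepsS n : back_steps n.+1 = back_steps n + back_step n.
Proof. by rewrite /back_steps -addn1 iotaD count_cat /= addn0. Qed.

Lemma walk_winding n : val (w n).1 + 2 * back_steps n = val (w 0).1 + n %[mod m].
Proof.
elim: n => [|n IHn]; first by rewrite muln0 addn0.
rewrite back_stepsS addnS -[(_ + n).+1]addn1 -[RHS]modnDml -IHn modnDml.
have := walk_w n; rewrite blowup_CmE /back_step.
case: (boolP (fwd (w n.+1) (w n))) => [/fwd_mod h _|_]; last rewrite orbF => /fwd_mod h.
  by rewrite -!addnA -[RHS]modnDml h modnDml; congr (_ %% _); lia.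
by rewrite -modnDml h modnDml; congr (_ %% _); lia.
Qed.

Lemma closed_walk_back_steps n : w n = w 0 -> 2 * back_steps n = n %[mod m].
Proof. by move=> wn; have /eqP := walk_winding n; rewrite wn eqn_modDl => /eqP. Qed.

Lemma back_steps_const n :
  (forall i, i < n -> back_step i = back_step 0) -> back_steps n = back_step 0 * n.
Proof.
move=> h; rewrite /back_steps (@eq_in_count _ _ (fun=> back_step 0)); last first.
  by move=> i; rewrite mem_iota => /h.
case: (back_step 0); last exact: count_pred0.
by rewrite mul1n -{2}(size_iota 0 n); apply: count_predT.
Qed.

Lemma extremal_back_steps_const n : (back_steps n == 0) || (back_steps n == n) ->
  forall i, i < n -> back_step i = back_step 0.
Proof.
move=> extremal i lt_in; have in_iota j : j <= i -> j \in iota 0 n by rewrite mem_iota; lia.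
case/orP: extremal => [|].
  rewrite eqn0Ngt -has_count => /hasPn none.
  by rewrite (negbTE (none i _)) ?(negbTE (none 0 _)) ?in_iota.
rewrite -{2}(size_iota 0 n) -all_count => /allP all_back.
by rewrite !all_back ?in_iota.
Qed.

Lemma closed_walk_turn n : w n = w 0 -> ~~ (m %| n) ->
  exists2 j, j.+1 < n & back_step j.+1 = ~~ back_step j.
Proof.
move=> wn; case: (boolP (has (fun j => back_step j.+1 != back_step j) (iota 0 n.-1))).
  case/hasP=> j; rewrite mem_iota => /andP[_ lt_jn] neq _; exists j; first by lia.
  by case: (back_step j) (back_step j.+1) neq => [] [].
move=> /hasPn noturn /negP[].
have const i : i < n -> back_step i = back_step 0.
  elim: i => // i IHi lt_in; rewrite -IHi; last by lia.
  have i_in : i \in iota 0 n.-1 by rewrite mem_iota; lia.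
  by have /negPn/eqP := noturn i i_in.
have := closed_walk_back_steps wn; rewrite (back_steps_const const) /dvdn.
case: (back_step 0); last by rewrite mul0n mod0n => <-.
by rewrite mul1n mul2n -addnn => h; rewrite -(mod0n m) -(eqn_modDr n) add0n h.
Qed.

Lemma odd_closed_walk_monotone : odd m -> w m = w 0 ->
  forall i, i < m -> back_step i = back_step 0.
Proof.
move=> odd_m wm; apply: extremal_back_steps_const.
have b_le : back_steps m <= m by rewrite -{2}(size_iota 0 m) count_size.
have /dvdnP[q eq_b] : m %| back_steps m.
  by rewrite -(@Gauss_dvdr m 2) ?coprimen2 // /dvdn closed_walk_back_steps // modnn.
rewrite {}eq_b in b_le *.
by case: q b_le => [|[|q]]; rewrite ?mul0n ?mul1n ?eqxx ?orbT //; nia.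
Qed.
End Walk.

Lemma odd_Cm_factor_side (F : rel V) : odd m -> is_Ck_factor G F m ->
  forall (d : bool) (v : V), exists2 y, F v y & side d v y.
Proof.
move=> odd_m [FG cyc] d v; have [c [_ conn c_adj]] := cyc v.
have /codomP[i0 ->] : v \in codom c by rewrite -conn connect0.
set w := cycle_walk c i0.
have walk_w j : G (w j) (w j.+1) by apply: FG; apply: (cycle_walk_step i0 c_adj).
have mono := odd_closed_walk_monotone walk_w odd_m (cycle_walk_closed c i0).
have m_gt0 : 0 < m := leq_ltn_trans (leq0n _) (ltn_ord i0).
have [-> | ->] : d = back_step w 0 \/ d = ~~ back_step w 0.
  by case: d; case: back_step; auto.
  have pred_m : m.-1.+1 = m := prednK m_gt0.
  exists (w m.-1).
    by have := cycle_walk_step_sym i0 c_adj m.-1; rewrite pred_m cycle_walk_closed.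
  have := side_back_step walk_w m.-1; rewrite mono ?pred_m //.
  by rewrite /w cycle_walk_closed.
exists (w 1); first exact: (cycle_walk_step i0 c_adj 0).
exact: side_fwd_step walk_w 0.
Qed.

Lemma Cn_factor_turn (F : rel V) (n : nat) (v0 : V) : 2 < n -> ~~ (m %| n) ->
  is_Ck_factor G F n ->
  exists d v a b, [/\ a != b, F v a, F v b, side d v a & side d v b].
Proof.
move=> n_gt2 ndvd_mn [FG cyc]; have [c [c_inj _ c_adj]] := cyc v0.
set i0 : 'I_n := Ordinal (ltn_trans (isT : 0 < 2) n_gt2); set w := cycle_walk c i0.
have walk_w j : G (w j) (w j.+1) by apply: FG; apply: (cycle_walk_step i0 c_adj).
have [j _ turn] := closed_walk_turn walk_w (cycle_walk_closed c i0) ndvd_mn.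
exists (back_step w j), (w j.+1), (w j), (w j.+2); split.
- exact: cycle_walk_neq2.
- exact: (cycle_walk_step_sym i0 c_adj).
- exact: (cycle_walk_step i0 c_adj).
- exact: side_back_step.
- by rewrite -[back_step w j]negbK -turn; apply: side_fwd_step.
Qed.
End BlowupCm.

Theorem mainTheorem5 (m : nat) (hodd : odd m) (hm : 3 <= m) :
  ~ exists F0 F1 F2 F3 : rel ('I_m * 'I_4),
      [/\ is_Ck_factor (@blowup _ (@Cm m) 4) F0 4,
          is_Ck_factor (@blowup _ (@Cm m) 4) F1 m,
          is_Ck_factor (@blowup _ (@Cm m) 4) F2 m,
          is_Ck_factor (@blowup _ (@Cm m) 4) F3 m &
          edge_partition4 (@blowup _ (@Cm m) 4) F0 F1 F2 F3].
Proof.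
move=> [F0 [F1 [F2 [F3 [C4 Cm1 Cm2 Cm3 part]]]]].
have m_gt0 : 0 < m := leq_trans (isT : 0 < 3) hm.
have ndvd_m4 : ~~ (m %| 4).
  apply/negP => dvd_m4; have := dvdn_leq (isT : 0 < 4) dvd_m4.
  by case: m hodd hm dvd_m4 {F0 F1 F2 F3 C4 Cm1 Cm2 Cm3 part m_gt0} => [|[|[|[|[|]]]]].
have [d [v [a [b [ab F0a F0b sa sb]]]]] :=
  Cn_factor_turn (Ordinal m_gt0, ord0) (isT : 2 < 4) ndvd_m4 C4.
have [y1 F1y1 s1] := odd_Cm_factor_side hodd Cm1 d v.
have [y2 F2y2 s2] := odd_Cm_factor_side hodd Cm2 d v.
have [y3 F3y3 s3] := odd_Cm_factor_side hodd Cm3 d v.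
have uniq_nbrs := edge_partition4_uniq part C4.1 Cm1.1 Cm2.1 ab F0a F0b F1y1 F2y2 F3y3.
have := uniq_side_size (d := d) (v := v) uniq_nbrs.
by rewrite /= sa sb s1 s2 s3 => /(_ isT).
Qed.
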